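(* For every $n\ge2$ and every generalised snake configuration $\bar\rho\in\mathcal{GS}_n$, $$\operatorname{sgn}(\bar\rho)(-1)^{S(\bar\rho)}=\sum_{\theta\in\{0,1\}^2}C_\theta\exp\Big(\frac{\pi i\theta_1}{n}\big(A(\bar\rho)+\tfrac12C(\bar\rho)\big)+\frac{\pi i\theta_2}{n}\big(B(\bar\rho)+\tfrac12C(\bar\rho)\big)\Big),$$ where $C_\theta=\tfrac12(-1)^{(\theta_1+n+1)(\theta_2+n+1)}$ and $\operatorname{sgn}(\bar\rho)$ is the sign of $\bar\rho$ as a permutation of $\mathbb{M}_n$.
   Context: $\mathbb{T}_n=(\mathbb{Z}/n\mathbb{Z})^2$, $e^1=(1,0)$, $e^2=(0,1)$, $e^3=\frac12(e^1+e^2)$; mid-edges $\mathbb{M}_n$ = black $\{v+\frac12e^1:v\in\mathbb{T}_n\}$ ⊔ white $\{v+\frac12e^2:v\in\mathbb{T}_n\}$, coordinates mod $n$. A generalised snake configuration is a permutation $\bar\rho$ of $\mathbb{M}_n$ with $\bar\rho(x)\in\{x,x+e^3,x+e^1\}$ ($x$ black), $\bar\rho(x)\in\{x,x+e^3,x+e^2\}$ ($x$ white); $\mathcal{GS}_n$ their set. $S(\bar\rho)$ = number of vertices $v$ with $\bar\rho(v-\frac12e^1)=v+\frac12e^1$ and $\bar\rho(v-\frac12e^2)=v+\frac12e^2$ (crossings); $A(\bar\rho),B(\bar\rho),C(\bar\rho)$ = numbers of $x\in\mathbb{M}_n$ with $\bar\rho(x)=x+e^1$, $x+e^2$, $x+e^3$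 respectively. *)

From HB Require Import structures.
From mathcomp Require Import all_boot all_order all_algebra all_fingroup.
From mathcomp Require Import reals trigo.
From mathcomp Require Import complex.
Set Implicit Arguments. Unset Strict Implicit. Unset Printing Implicit Defensive.
Import Order.TTheory GRing.Theory Num.Theory.
Local Open Scope ring_scope.

(* Torus vertices T_n = (Z/nZ)^2 (used only for n >= 2). *)
Definition vert (n : nat) : finType := ('Z_n * 'Z_n)%type.
Definition e1 {n : nat} : vert n := (1, 0).
Definition e2 {n : nat} : vert n := (0, 1).
Definition vadd {n : nat} (v w : vert n) : vert n := (v.1 + w.1, v.2 + w.2).
Definition vsub {n : nat} (v w : vert n) : vert n := (v.1 - w.1, v.2 - w.2).

(* Mid-edges M_n: (false, v) is the black mid-edge v + e^1/2,
   (true, v) is the white mid-edge v + e^2/2. *)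
Definition midedge (n : nat) : finType := (bool * vert n)%type.
Definition black {n : nat} (v : vert n) : midedge n := (false, v).
Definition white {n : nat} (v : vert n) : midedge n := (true, v).

(* x + e^1, x + e^2, x + e^3 for a mid-edge x (e^3 = (e^1+e^2)/2). *)
Definition plus1 {n : nat} (x : midedge n) : midedge n := (x.1, vadd x.2 e1).
Definition plus2 {n : nat} (x : midedge n) : midedge n := (x.1, vadd x.2 e2).
Definition plus3 {n : nat} (x : midedge n) : midedge n :=
  if x.1 then black (vadd x.2 e2)   (* v + e2/2 + e3 = (v+e2) + e1/2 *)
  else white (vadd x.2 e1).         (* v + e1/2 + e3 = (v+e1) + e2/2 *)

Definition is_gsnake {n : nat} (rho : {perm midedge n}) : Prop :=
  forall x : midedge n,
    if x.1 == false
    then rho x = x \/ rho x = plus3 x \/ rho x = plus1 x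
    else rho x = x \/ rho x = plus3 x \/ rho x = plus2 x.

(* S: crossings at v : rho(v - e1/2) = v + e1/2 and rho(v - e2/2) = v + e2/2. *)
Definition Scount {n : nat} (rho : {perm midedge n}) : nat :=
  #|[set v : vert n | (rho (black (vsub v e1)) == black v)
                     && (rho (white (vsub v e2)) == white v)]|.
Definition Acount {n : nat} (rho : {perm midedge n}) : nat :=
  #|[set x : midedge n | rho x == plus1 x]|.
Definition Bcount {n : nat} (rho : {perm midedge n}) : nat :=
  #|[set x : midedge n | rho x == plus2 x]|.
Definition Ccount {n : nat} (rho : {perm midedge n}) : nat :=
  #|[set x : midedge n | rho x == plus3 x]|.

Definition expi {R : realType} (t : R) : R[i] := Complex (cos t) (sin t).

Definition lhs {R : realType} {n : nat} (rho : {perm midedge n}) : R[i] :=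
  ((-1) ^+ odd_perm rho * (-1) ^+ Scount rho : R)%:C%C.

Definition Ctheta {R : realType} (n : nat) (t1 t2 : nat) : R :=
  2^-1 * (-1) ^+ ((t1 + n + 1) * (t2 + n + 1))%N.

Definition rhs {R : realType} {n : nat} (rho : {perm midedge n}) : R[i] :=
  \sum_(th : bool * bool)
    (Ctheta n th.1 th.2)%:C%C *
    expi (pi * (th.1 : nat)%:R / n%:R * ((Acount rho)%:R + 2^-1 * (Ccount rho)%:R)
        + pi * (th.2 : nat)%:R / n%:R * ((Bcount rho)%:R + 2^-1 * (Ccount rho)%:R)).

(* Order the mid-edges by antidiagonal (a + b mod n), then by doubled abscissa, and count
   the inversions of rho for this order; mod 2 only pairs of moved mid-edges matter.  Every
   move advances a mid-edge by one antidiagonal, so each antidiagonal carries the same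
   number m of moved mid-edges.  Summing the doubled displacements over the cycles of rho
   gives 2A + C = 2n W1 and 2B + C = 2n W2, where W1, W2 count horizontal and vertical
   wrap-arounds; hence m n = A + B + C = n (W1 + W2) and the right-hand side only depends
   on the parities of n, W1, W2.  Inversions across the seam from antidiagonal n-1 to 0
   number (n m - m) m, and inside an antidiagonal two moved mid-edges swap exactly at a
   crossing or at a horizontal wrap-around, which contributes S + W1 (m - 1) mod 2. *)

From HB Require Import structures.
From mathcomp Require Import all_boot all_order all_algebra all_fingroup.
From mathcomp Require Import reals trigo complex.
From mathcomp Require Import zify ring lra.
Set Implicit Arguments. Unset Strict Implicit. Unset Printing Implicit Defensive.
Import Order.TTheory GRing.Theory Num.Theory.

Section SumLemmas.
Variable T : finType.

Lemma sum_perm (r : {perm T}) (F : T -> nat) : \sum_x F (r x) = \sum_x F x.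
Proof. by rewrite (reindex_inj (@perm_inj _ r^-1%g)); apply: eq_bigr => x _; rewrite permKV. Qed.

Lemma sum_eq1 (a : T) : \sum_x ((x == a) : nat) = 1.
Proof. by rewrite (bigD1 a) //= eqxx big1 // => x /negbTE ->. Qed.

Lemma sum_eq1_mul (a : T) c : \sum_x (x == a) * c = c.
Proof. by rewrite -big_distrl /= sum_eq1 mul1n. Qed.

Lemma card_set_sum (P : pred T) : #|[set x | P x]| = \sum_x (P x : nat).
Proof. by rewrite -sum1dep_card big_mkcond; apply: eq_bigr => x _; case: (P x). Qed.

End SumLemmas.

Section Inversions.
Variables (T : finType) (k : T -> nat).
Hypothesis k_inj : injective k.

Definition inversions (r : {perm T}) : nat :=
  \sum_x \sum_y ((k x < k y) && (k (r y) < k (r x))).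

Lemma inversions1 : inversions 1 = 0.
Proof.
rewrite /inversions big1 // => x _; rewrite big1 // => y _.
by rewrite !perm1; case: ltngtP.
Qed.

Lemma key_lt_total x y : x != y -> (k x < k y) + (k y < k x) = 1.
Proof. by rewrite -(inj_eq k_inj); case: ltngtP. Qed.

Definition flipped (t : {perm T}) x y := (k x < k y) != (k (t x) < k (t y)).

Lemma odd_inversions_mul (t r : {perm T}) :
  odd (inversions (t * r)) =
  odd (inversions r) (+) odd (\sum_x \sum_y (flipped t^-1%g x y && (k (r y) < k (r x)))).
Proof.
have -> : inversions (t * r) =
    \sum_x \sum_y ((k (t^-1%g x) < k (t^-1%g y)) && (k (r y) < k (r x))).
  rewrite /inversions (reindex_inj (@perm_inj _ t^-1%g)); apply: eq_bigr => x _.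
  rewrite (reindex_inj (@perm_inj _ t^-1%g)); apply: eq_bigr => y _.
  by rewrite !permM !permKV.
set F := \sum_x \sum_y (flipped _ _ _ && _ : nat).
have : (\sum_x \sum_y ((k (t^-1%g x) < k (t^-1%g y)) && (k (r y) < k (r x)) : nat)) + inversions r =
    2 * (\sum_x \sum_y ((k x < k y) && (k (t^-1%g x) < k (t^-1%g y)) && (k (r y) < k (r x)) : nat)) + F.
  rewrite /inversions /F big_distrr -!big_split; apply: eq_bigr => x _.
  rewrite big_distrr -!big_split; apply: eq_bigr => y _ /=.
  by rewrite /flipped; case: (_ < _); case: (_ < _); case: (_ < _).
move/(congr1 odd); rewrite [odd (2 * _ + _)]oddD oddM oddD /= => <-.
by rewrite addbC -addbA addbb addbF.
Qed.

Lemma flipped_sym (t : {perm T}) x y : flipped t x y = flipped t y x.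
Proof.
have [-> //|xy] := eqVneq x y.
have txy : t x != t y by rewrite (inj_eq (@perm_inj _ t)).
rewrite /flipped; move: (key_lt_total xy) (key_lt_total txy).
by case: (k x < k y); case: (k y < k x); case: (k (t x) < k (t y)); case: (k (t y) < k (t x)).
Qed.

Lemma double_flipped_inversions (t r : {perm T}) :
  2 * \sum_x \sum_y (flipped t x y && (k (r y) < k (r x)) : nat) =
  \sum_x \sum_y (flipped t x y : nat).
Proof.
rewrite mul2n -addnn {2}exchange_big -big_split; apply: eq_bigr => x _.
rewrite -big_split; apply: eq_bigr => y _ /=; rewrite (flipped_sym t y x).
have [-> |xy] := eqVneq x y; first by rewrite /flipped !ltnn.
have rxy : r x != r y by rewrite (inj_eq (@perm_inj _ r)).
by move: (key_lt_total rxy); case: flipped; case: (_ < _); case: (_ < _).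
Qed.

Section Transposition.
Variables a b : T.
Hypothesis ab_lt : k a < k b.
Let btw z := (k a < k z) && (k z < k b).

Lemma key_tperm z :
  k (tperm a b z) = if k z == k a then k b else if k z == k b then k a else k z.
Proof.
have ba : (b == a) = false by apply: contraTF ab_lt => /eqP ->; rewrite ltnn.
by rewrite !(inj_eq k_inj); case: tpermP => [->|->|/eqP/negbTE -> /eqP/negbTE ->]; rewrite ?eqxx ?ba.
Qed.

Lemma flipped_tperm x y :
  (flipped (tperm a b) x y : nat) =
  (x == a) * ((y == b) + btw y) + (x == b) * ((y == a) + btw y) +
  btw x * ((y == a) + (y == b)).
Proof.
rewrite /flipped /btw !key_tperm -!(inj_eq k_inj); move: ab_lt.
by case: (k x =P k a); case: (k x =P k b); case: (k y =P k a); case: (k y =P k b) => *; lia.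
Qed.

Lemma sum_flipped_tperm :
  \sum_x \sum_y (flipped (tperm a b) x y : nat) = 2 * (1 + 2 * \sum_z (btw z : nat)).
Proof.
rewrite (eq_bigr (fun x => (x == a) * (1 + \sum_z (btw z : nat)) +
    (x == b) * (1 + \sum_z (btw z : nat)) + btw x * 2)) => [|x _].
  by rewrite !big_split /= !sum_eq1_mul -big_distrl /=; lia.
rewrite (eq_bigr _ (fun y _ => flipped_tperm x y)) !big_split /= -!big_distrr /=.
by rewrite !big_split /= !sum_eq1.
Qed.

End Transposition.

Lemma odd_inversions_tperm a b r : a != b ->
  odd (inversions (tperm a b * r)) = ~~ odd (inversions r).
Proof.
wlog ab_lt : a b / k a < k b => [hw ab|_].
  have := key_lt_total ab; case: ltngtP => // [ab_lt|ba_lt] _; first exact: hw.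
  by rewrite tpermC; apply: hw; rewrite // eq_sym.
rewrite odd_inversions_mul tpermV.
have := double_flipped_inversions (tperm a b) r; rewrite sum_flipped_tperm // => /eqP.
rewrite eqn_pmul2l // => /eqP ->.
by rewrite oddD /= oddM addbT.
Qed.

Lemma odd_perm_inversions r : odd_perm r = odd (inversions r).
Proof.
have [ts -> dts] := prod_tpermP r.
elim: ts dts => [|t ts IH] /=; first by rewrite big_nil odd_perm1 inversions1.
case/andP=> dt dts; rewrite big_cons odd_mul_tperm dt odd_inversions_tperm // IH //.
Qed.

Lemma fixed_point_crossings (r : {perm T}) f : r f = f ->
  \sum_y ((k f < k y) && (k (r y) < k f) : nat) =
  \sum_x ((k x < k f) && (k f < k (r x)) : nat).
Proof.
move=> rf.
have E : \sum_y ((k (r y) < k f) : nat) = \sum_y ((k y < k f) : nat)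
  by rewrite (sum_perm r (fun y => (k y < k f) : nat)).
have E1 y : ((k (r y) < k f) : nat) =
    ((k f < k y) && (k (r y) < k f) : nat) + ((k y < k f) && (k (r y) < k f) : nat).
  have [->|yf] := eqVneq y f; first by rewrite rf ltnn.
  by move: (key_lt_total yf); case: (ltngtP (k y) (k f)); case: (k (r y) < k f).
have E2 y : ((k y < k f) : nat) =
    ((k y < k f) && (k f < k (r y)) : nat) + ((k y < k f) && (k (r y) < k f) : nat).
  have [->|yf] := eqVneq y f; first by rewrite ltnn.
  have ryf : r y != f by rewrite -{1}rf (inj_eq (@perm_inj _ r)).
  by move: (key_lt_total ryf); case: (ltngtP (k (r y)) (k f)); case: (k y < k f).
rewrite (eq_bigr _ (fun y _ => E1 y)) (eq_bigr _ (fun y _ => E2 y)) !big_split /= in E.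
exact: addIn E.
Qed.

Definition moved_inversions (r : {perm T}) : nat :=
  \sum_x \sum_y ((r x != x) && (r y != y) && (k x < k y) && (k (r y) < k (r x))).

(* An inversion involving a fixed point f is a mid-edge jumping over f; as many jump
   over f upwards as downwards, so these inversions come in pairs. *)
Lemma odd_inversions_moved r : odd (inversions r) = odd (moved_inversions r).
Proof.
set I := fun x y => ((k x < k y) && (k (r y) < k (r x)) : nat).
have E x y : I x y = ((r x != x) && (r y != y) && (k x < k y) && (k (r y) < k (r x)) : nat)
    + ((r x == x) : nat) * I x y + ((r y == y) : nat) * I x y.
  rewrite /I; case: (eqVneq (r x) x) => [rx|rx]; case: (eqVneq (r y) y) => [ry|ry] //=.
  - by rewrite rx ry; case: ltngtP.
  - by rewrite !add0n !addn0 mul1n.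
  - by rewrite !add0n mul1n.
  - by rewrite !addn0.
have fixed_rows : \sum_x \sum_y ((r x == x) : nat) * I x y + \sum_x \sum_y ((r y == y) : nat) * I x y =
    2 * \sum_x ((r x == x) : nat) * \sum_y I x y.
  rewrite [X in _ + X]exchange_big -big_split big_distrr /=; apply: eq_bigr => x _.
  rewrite -!big_distrr /=; case: (eqVneq (r x) x) => rx; last by rewrite !mul0n.
  by rewrite !mul1n /I rx (fixed_point_crossings rx) mul2n addnn.
rewrite /inversions -/I (eq_bigr _ (fun x _ => eq_bigr _ (fun y _ => E x y))).
rewrite (eq_bigr _ (fun x _ => big_split _ _ _ _ _)) big_split /=.
rewrite (eq_bigr _ (fun x _ => big_split _ _ _ _ _)) big_split /=.
by rewrite -addnA fixed_rows oddD oddM addbF.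
Qed.

End Inversions.

Ltac case_ifs := repeat match goal with
  | |- context [if ?b then _ else _] =>
      lazymatch b with true => fail | false => fail | context [if _ then _ else _] => fail | _ =>
      let E := fresh "E" in case E: b; [ | move/negbT: E => E] end
  | |- context [nat_of_bool ?b] =>
      lazymatch b with true => fail | false => fail | _ =>
      let E := fresh "E" in case E: b; [ | move/negbT: E => E] end
  end.

Section ZpArith.
Variables (n : nat) (hn : 1 < n).

Definition succ_mod (a : nat) := if a == n.-1 then 0 else a.+1.

Lemma Zp_val_lt (z : 'Z_n) : (z : nat) < n.
Proof. by case: z => m /=; rewrite Zp_cast. Qed.

Lemma modn_lt_double a : a < 2 * n -> a %% n = if a < n then a else a - n.
Proof.
move=> h; case: ifP => h2; first by rewrite modn_small.
have -> : a = (a - n) + n by lia.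
by rewrite modnDr modn_small //; lia.
Qed.

Lemma Zp_val_add (y z : 'Z_n) : ((y + z)%R : nat) = if y + z < n then y + z else y + z - n.
Proof.
rewrite -modn_lt_double; last by have := Zp_val_lt y; have := Zp_val_lt z; lia.
by rewrite /=; congr (_ %% _); apply: Zp_cast.
Qed.

Lemma Zp_val1 : ((1%R : 'Z_n) : nat) = 1.
Proof. by rewrite /= (Zp_cast hn) modn_small. Qed.

Lemma Zp_val_opp (z : 'Z_n) : ((- z)%R : nat) = if (z : nat) == 0 then 0 else n - z.
Proof.
case: z => m hm /=; rewrite (Zp_cast hn) in hm *.
case: eqP => [->|h]; first by rewrite subn0 modnn.
by rewrite modn_small; lia.
Qed.

Lemma Zp_val_add0 (z : 'Z_n) : ((z + 0)%R : nat) = z.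
Proof. by rewrite GRing.addr0. Qed.

Lemma Zp_val_succ (z : 'Z_n) : ((z + 1)%R : nat) = succ_mod z.
Proof. rewrite Zp_val_add Zp_val1 /succ_mod; have := Zp_val_lt z; case_ifs; lia. Qed.

Lemma Zp_val_pred (z : 'Z_n) : ((z - 1)%R : nat) = if (z : nat) == 0 then n.-1 else (z : nat).-1.
Proof. rewrite Zp_val_add Zp_val_opp Zp_val1; have := Zp_val_lt z; case_ifs; lia. Qed.

Lemma succ_mod_neq a : a < n -> succ_mod a != a.
Proof. rewrite /succ_mod; case_ifs; lia. Qed.

Lemma succ_mod_inj a b : a < n -> b < n -> (succ_mod a == succ_mod b) = (a == b).
Proof. by rewrite /succ_mod => ha hb; case_ifs; lia. Qed.

End ZpArith.

Section Coordinates.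
Variables (n : nat) (hn : 1 < n).
Implicit Types x y : midedge n.

Definition xcoord x : nat := x.2.1.
Definition ycoord x : nat := x.2.2.

(* Twice the planar coordinates of a mid-edge: v + e1/2 has doubled abscissa 2 v_1 + 1. *)
Definition xpos x : nat := 2 * xcoord x + ~~ x.1.
Definition ypos x : nat := 2 * ycoord x + x.1.

Definition diag x : nat := (xcoord x + ycoord x) %% n.

Definition diag_key x : nat := diag x * (2 * n) + xpos x.

Lemma xcoord_lt x : xcoord x < n. Proof. exact: Zp_val_lt. Qed.
Lemma ycoord_lt x : ycoord x < n. Proof. exact: Zp_val_lt. Qed.
Lemma xpos_lt x : xpos x < 2 * n.
Proof. rewrite /xpos; have := xcoord_lt x; case: (x.1) => /=; lia. Qed.
Lemma diag_lt x : diag x < n.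
Proof. by rewrite /diag ltn_mod; lia. Qed.

Lemma midedge_eq x y : x.1 = y.1 -> xcoord x = xcoord y -> ycoord x = ycoord y -> x = y.
Proof.
case: x => c [a b]; case: y => c' [a' b']; rewrite /xcoord /ycoord /= => -> ha hb.
by rewrite (val_inj ha) (val_inj hb).
Qed.

Lemma xcoord_plus1 x : xcoord (plus1 x) = succ_mod n (xcoord x). Proof. exact: Zp_val_succ. Qed.
Lemma ycoord_plus1 x : ycoord (plus1 x) = ycoord x. Proof. exact: Zp_val_add0. Qed.
Lemma xcoord_plus2 x : xcoord (plus2 x) = xcoord x. Proof. exact: Zp_val_add0. Qed.
Lemma ycoord_plus2 x : ycoord (plus2 x) = succ_mod n (ycoord x). Proof. exact: Zp_val_succ. Qed.
Lemma xcoord_plus3 x : xcoord (plus3 x) = if x.1 then xcoord x else succ_mod n (xcoord x).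
Proof. by case: x => [[] [a b]]; [exact: Zp_val_add0 | exact: Zp_val_succ]. Qed.
Lemma ycoord_plus3 x : ycoord (plus3 x) = if x.1 then succ_mod n (ycoord x) else ycoord x.
Proof. by case: x => [[] [a b]]; [exact: Zp_val_succ | exact: Zp_val_add0]. Qed.
Lemma color_plus1 x : (plus1 x).1 = x.1. Proof. by []. Qed.
Lemma color_plus2 x : (plus2 x).1 = x.1. Proof. by []. Qed.
Lemma color_plus3 x : (plus3 x).1 = ~~ x.1.
Proof. by case: x => [[] [a b]]. Qed.

Lemma plus1_neq x : plus1 x != x.
Proof. apply/eqP => h; have := succ_mod_neq hn (xcoord_lt x); by rewrite -xcoord_plus1 h eqxx. Qed.
Lemma plus2_neq x : plus2 x != x.
Proof. apply/eqP => h; have := succ_mod_neq hn (ycoord_lt x); by rewrite -ycoord_plus2 h eqxx. Qed.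
Lemma plus3_neq x : plus3 x != x.
Proof. by apply/eqP => h; have := color_plus3 x; rewrite h; case: x.1. Qed.
Lemma plus13_neq x : plus1 x != plus3 x.
Proof. by apply/eqP => h; have := color_plus3 x; rewrite -h /=; case: x.1. Qed.
Lemma plus23_neq x : plus2 x != plus3 x.
Proof. by apply/eqP => h; have := color_plus3 x; rewrite -h /=; case: x.1. Qed.
Lemma plus12_neq x : plus1 x != plus2 x.
Proof.
apply/eqP => h; have := succ_mod_neq hn (xcoord_lt x).
by rewrite -xcoord_plus1 h xcoord_plus2 eqxx.
Qed.

Lemma diag_xpos_inj x y : diag x = diag y -> xpos x = xpos y -> x = y.
Proof.
have := xcoord_lt x; have := ycoord_lt x; have := xcoord_lt y; have := ycoord_lt y.
move=> h1 h2 h3 h4; rewrite /diag /xpos !modn_lt_double; try lia.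
move=> hd hp.
have ec : x.1 = y.1 by move: hp; case: (x.1); case: (y.1) => /=; lia.
have ea : xcoord x = xcoord y by move: hp; rewrite ec; case: (y.1) => /=; lia.
by apply: midedge_eq => //; move: hd; rewrite ea; case_ifs; lia.
Qed.

Lemma ltn_lex l1 l2 p1 p2 m : p1 < m -> p2 < m ->
  (l1 * m + p1 < l2 * m + p2) = (l1 < l2) || ((l1 == l2) && (p1 < p2)).
Proof.
move=> h1 h2; case: (ltngtP l1 l2) => h /=; last by rewrite h ltn_add2l.
- apply/idP; have : l1 * m + m <= l2 * m by rewrite addnC -mulSn leq_mul2r h orbT.
  lia.
- apply/negbTE; rewrite -leqNgt; have : l2 * m + m <= l1 * m by rewrite addnC -mulSn leq_mul2r h orbT.
  lia.
Qed.

Lemma diag_key_lt x y :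
  (diag_key x < diag_key y) = (diag x < diag y) || ((diag x == diag y) && (xpos x < xpos y)).
Proof. by rewrite /diag_key ltn_lex ?xpos_lt. Qed.

Lemma diag_key_inj : injective diag_key.
Proof.
move=> x y e.
have := diag_key_lt x y; have := diag_key_lt y x; rewrite e ltnn.
case: (ltngtP (diag x) (diag y)) => //= dxy.
by case: (ltngtP (xpos x) (xpos y)) => // pxy _ _; apply: diag_xpos_inj.
Qed.

End Coordinates.

Section SnakeMoves.
Variables (n : nat) (hn : 1 < n) (rho : {perm midedge n}) (hrho : is_gsnake rho).
Implicit Types x y : midedge n.

Definition moved x := rho x != x.
Definition step1 x := rho x == plus1 x.
Definition step2 x := rho x == plus2 x.
Definition step3 x := rho x == plus3 x.

Variant step_spec x : bool -> bool -> bool -> bool -> Prop :=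
  | StepFix of rho x = x : step_spec x false false false false
  | Step1 of rho x = plus1 x & x.1 = false : step_spec x true true false false
  | Step2 of rho x = plus2 x & x.1 = true : step_spec x true false true false
  | Step3 of rho x = plus3 x : step_spec x true false false true.

Lemma stepP x : step_spec x (moved x) (step1 x) (step2 x) (step3 x).
Proof.
have h12 := plus12_neq hn x; have h13 := plus13_neq x; have h23 := plus23_neq x.
have h1 := plus1_neq hn x; have h2 := plus2_neq hn x; have h3 := plus3_neq x.
rewrite /moved /step1 /step2 /step3; have := hrho x.
case hx : x.1 => /= [] [h|[h|h]]; rewrite h ?eqxx.
- by rewrite !(eq_sym x) (negbTE h1) (negbTE h2) (negbTE h3); constructor.
- by rewrite h3 eq_sym (negbTE h13) eq_sym (negbTE h23); constructor.
- by rewrite h2 eq_sym (negbTE h12) (negbTE h23); constructor.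
- by rewrite !(eq_sym x) (negbTE h1) (negbTE h2) (negbTE h3); constructor.
- by rewrite h3 eq_sym (negbTE h13) eq_sym (negbTE h23); constructor.
- by rewrite h1 (negbTE h12) (negbTE h13); constructor.
Qed.

Lemma moved_steps x : (moved x : nat) = step1 x + step2 x + step3 x.
Proof. by case: stepP. Qed.

Definition xshift x : nat := 2 * step1 x + step3 x.
Definition yshift x : nat := 2 * step2 x + step3 x.
Definition xwraps x : bool := 2 * n <= xpos x + xshift x.
Definition ywraps x : bool := 2 * n <= ypos x + yshift x.

Lemma xpos_rho x : xpos (rho x) + 2 * n * xwraps x = xpos x + xshift x.
Proof.
rewrite /xwraps /xshift /xpos; have := xcoord_lt hn x; have := ycoord_lt hn x.
case: stepP => [h|h c|h c|h];
  rewrite h ?xcoord_plus1 ?xcoord_plus2 ?xcoord_plus3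
    ?color_plus1 ?color_plus2 ?color_plus3 ?c /succ_mod /=; case_ifs; lia.
Qed.

Lemma ypos_rho x : ypos (rho x) + 2 * n * ywraps x = ypos x + yshift x.
Proof.
rewrite /ywraps /yshift /ypos; have := xcoord_lt hn x; have := ycoord_lt hn x.
case: stepP => [h|h c|h c|h];
  rewrite h ?ycoord_plus1 ?ycoord_plus2 ?ycoord_plus3
    ?color_plus1 ?color_plus2 ?color_plus3 ?c /succ_mod /=; case_ifs; lia.
Qed.

Lemma diag_rho x : diag (rho x) = if moved x then succ_mod n (diag x) else diag x.
Proof.
have := xcoord_lt hn x; have := ycoord_lt hn x.
have := xcoord_lt hn (rho x); have := ycoord_lt hn (rho x).
move=> h1 h2 h3 h4; rewrite /diag !modn_lt_double; try lia.
case: stepP => [h|h c|h c|h]; rewrite h ?xcoord_plus1 ?xcoord_plus2 ?xcoord_plus3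
  ?ycoord_plus1 ?ycoord_plus2 ?ycoord_plus3 ?color_plus1 ?color_plus2 ?color_plus3 ?c
  /succ_mod /=; case_ifs; lia.
Qed.

Lemma xwraps_moved x : xwraps x -> moved x /\ xpos x = (2 * n).-1.
Proof.
rewrite /xwraps /xshift /xpos; have := xpos_lt hn x; rewrite /xpos.
by case: stepP => [h|h c|h c|h] /=; rewrite ?c /= => hl; split => //; lia.
Qed.

End SnakeMoves.

Section Winding.
Variables (n : nat) (hn : 1 < n) (rho : {perm midedge n}) (hrho : is_gsnake rho).
Implicit Types x y : midedge n.
Local Notation moved := (moved rho).

Definition xwinding := \sum_x (xwraps rho x : nat).
Definition ywinding := \sum_x (ywraps rho x : nat).

(* Summing the displacement over the cycles of rho: positions cancel, leaving 2n per wrap. *)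
Lemma sum_xshift : \sum_x xshift rho x = 2 * n * xwinding.
Proof.
have E : \sum_x (xpos (rho x) + 2 * n * xwraps rho x) = \sum_x (xpos x + xshift rho x).
  by apply: eq_bigr => x _; exact: xpos_rho.
rewrite big_split /= [X in _ = X]big_split /= (sum_perm rho (@xpos n)) -big_distrr /= in E.
by move/addnI: E.
Qed.

Lemma sum_yshift : \sum_x yshift rho x = 2 * n * ywinding.
Proof.
have E : \sum_x (ypos (rho x) + 2 * n * ywraps rho x) = \sum_x (ypos x + yshift rho x).
  by apply: eq_bigr => x _; exact: ypos_rho.
rewrite big_split /= [X in _ = X]big_split /= (sum_perm rho (@ypos n)) -big_distrr /= in E.
by move/addnI: E.
Qed.

Lemma Acount_xwinding : 2 * Acount rho + Ccount rho = 2 * n * xwinding.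
Proof.
rewrite -sum_xshift /Acount /Ccount !card_set_sum big_distrr -big_split /=.
by apply: eq_bigr.
Qed.

Lemma Bcount_ywinding : 2 * Bcount rho + Ccount rho = 2 * n * ywinding.
Proof.
rewrite -sum_yshift /Bcount /Ccount !card_set_sum big_distrr -big_split /=.
by apply: eq_bigr.
Qed.

Definition nmoved := \sum_x (moved x : nat).

Lemma nmoved_winding : nmoved = n * (xwinding + ywinding).
Proof.
apply/eqP; rewrite -(@eqn_pmul2l 2) //; apply/eqP.
have := Acount_xwinding; have := Bcount_ywinding.
rewrite /Acount /Bcount /Ccount !card_set_sum /nmoved.
rewrite (eq_bigr _ (fun x _ => moved_steps hn hrho x)) !big_split /=.
by rewrite /step1 /step2 /step3; lia.
Qed.

Definition nmoved_on s := \sum_x ((moved x) && (diag x == s) : nat).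

(* Moved mid-edges advance by one antidiagonal, so each antidiagonal carries the same number of them. *)
Lemma nmoved_on_succ s : s < n -> nmoved_on (succ_mod n s) = nmoved_on s.
Proof.
move=> hs.
have E := sum_perm rho (fun x => (diag x == succ_mod n s) : nat).
have E1 x : ((diag (rho x) == succ_mod n s) : nat) =
    ((moved x) && (diag x == s) : nat) + ((~~ moved x) && (diag x == succ_mod n s) : nat).
  rewrite (diag_rho hn hrho x); case: (moved x) => //=.
  by rewrite succ_mod_inj ?(diag_lt hn) // addn0.
have E2 x : ((diag x == succ_mod n s) : nat) =
    ((moved x) && (diag x == succ_mod n s) : nat) + ((~~ moved x) && (diag x == succ_mod n s) : nat).
  by case: (moved x); rewrite /= ?addn0.
rewrite (eq_bigr _ (fun x _ => E1 x)) (eq_bigr _ (fun x _ => E2 x)) !big_split /= in E.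
by move/addIn: E.
Qed.

Lemma nmoved_on_const s : s < n -> nmoved_on s = nmoved_on 0.
Proof.
elim: s => // s IH hs; have hs' : s < n by lia.
rewrite -(IH hs') -(nmoved_on_succ hs') /succ_mod; case: eqP => //; lia.
Qed.

Lemma nmoved_on_sum : nmoved = n * nmoved_on 0.
Proof.
rewrite /nmoved (eq_bigr (fun x => \sum_(s < n) ((moved x) && (diag x == s) : nat))); last first.
  move=> x _; rewrite (bigD1 (Ordinal (diag_lt hn x))) //= eqxx big1 ?addn0 ?andbT //.
  by move=> i /negbTE hi; rewrite -(inj_eq val_inj) /= eq_sym in hi; rewrite hi andbF.
rewrite exchange_big /= (eq_bigr (fun _ => nmoved_on 0)) => [|i _]; last exact: nmoved_on_const.
by rewrite sum_nat_const card_ord.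
Qed.

Lemma nmoved_on0_winding : nmoved_on 0 = xwinding + ywinding.
Proof.
by apply/eqP; rewrite -(@eqn_pmul2l n) -?nmoved_on_sum -?nmoved_winding //; lia.
Qed.

End Winding.

Section SignOfSnake.
Variables (n : nat) (hn : 1 < n) (rho : {perm midedge n}) (hrho : is_gsnake rho).
Implicit Types x y : midedge n.
Local Notation moved := (moved rho).
Local Notation step1 := (step1 rho).
Local Notation step2 := (step2 rho).
Local Notation xwraps := (xwraps rho).

Definition diag_lt_pair x y : bool := [&& moved x, moved y, diag x == diag y & xpos x < xpos y].

Definition crossing_pair x y : bool :=
  [&& diag x == diag y, step1 x, step2 y & xpos y == succ_mod (2 * n) (xpos x)].

(* rho moves every moved mid-edge to the next antidiagonal, so two of them change order
   either across the seam from antidiagonal n-1 to 0 or inside one antidiagonal. *)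
Lemma moved_inversion x y :
  ((moved x) && (moved y) && (diag_key x < diag_key y) &&
     (diag_key (rho y) < diag_key (rho x)) : nat) =
  ((moved x) && (diag x < n.-1) && ((moved y) && (diag y == n.-1)) : nat) +
  diag_lt_pair x y * (xpos (rho y) < xpos (rho x)).
Proof.
rewrite /diag_lt_pair !(diag_key_lt hn) (diag_rho hn hrho x) (diag_rho hn hrho y).
have := diag_lt hn x; have := diag_lt hn y.
case: (moved x); case: (moved y); rewrite /= ?andbF //.
rewrite /succ_mod; case_ifs; lia.
Qed.

Lemma step1_moved x : step1 x -> moved x. Proof. by case: stepP. Qed.
Lemma step2_moved x : step2 x -> moved x. Proof. by case: stepP. Qed.

Lemma crossing_pair_diag_lt x y : xpos x < (2 * n).-1 -> crossing_pair x y -> diag_lt_pair x y.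
Proof.
move=> hx /and4P[dxy /step1_moved mx /step2_moved my /eqP e].
by rewrite /diag_lt_pair mx my dxy e /succ_mod; case: eqP => [e0|_]; [lia | rewrite /=].
Qed.

Lemma crossing_pair_wrap x y : xpos y = (2 * n).-1 -> crossing_pair y x -> diag_lt_pair x y.
Proof.
move=> hy /and4P[dyx /step1_moved my /step2_moved mx /eqP e].
by rewrite /diag_lt_pair mx my eq_sym dyx e /succ_mod hy eqxx /=; lia.
Qed.

(* Moved mid-edges x left of y on one antidiagonal trade places exactly when they cross or
   y wraps around horizontally; a crossing at the last abscissa is booked on the left. *)
Lemma diag_lt_pair_swap x y :
  diag_lt_pair x y * (xpos (rho y) < xpos (rho x)) + crossing_pair y x * (xpos y == (2 * n).-1) =
  crossing_pair x y * (xpos x < (2 * n).-1) + diag_lt_pair x y * xwraps y.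
Proof.
have hx := xpos_lt hn x; have hy := xpos_lt hn y.
case hT: (diag_lt_pair x y); last first.
  have -> : (crossing_pair x y : nat) * (xpos x < (2 * n).-1) = 0.
    case: (boolP (xpos x < _)) => [hp|_]; last by rewrite muln0.
    by apply/eqP; rewrite muln1 eqb0; apply: contraFN hT; apply: crossing_pair_diag_lt.
  have -> : (crossing_pair y x : nat) * (xpos y == (2 * n).-1) = 0.
    case: eqP => [hp|_]; last by rewrite muln0.
    by apply/eqP; rewrite muln1 eqb0; apply: contraFN hT; apply: crossing_pair_wrap.
  by rewrite !mul0n.
move: (hT) => /and4P[mx my /eqP dxy pxy].
have ne : xpos (rho x) != xpos (rho y).
  apply: contraTneq pxy => e.
  have hd : diag (rho x) = diag (rho y) by rewrite !(diag_rho hn hrho) mx my dxy.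
  by move/perm_inj: (diag_xpos_inj hn hd e) => ->; rewrite ltnn.
have ex := xpos_rho hn hrho x; have ey := xpos_rho hn hrho y.
have hpx : xpos x = 2 * xcoord x + ~~ x.1 by [].
have hpy : xpos y = 2 * xcoord y + ~~ y.1 by [].
move: ex ey ne hpx hpy; rewrite /crossing_pair /xwraps /xshift /succ_mod dxy eqxx /=.
move: mx my; case: (stepP hn hrho x) => [h|h c|h c|h] //= _; rewrite ?c /=;
  case: (stepP hn hrho y) => [h'|h' c'|h' c'|h'] //= _; rewrite ?c' /= => ex ey ne hpx hpy;
  case_ifs; lia.
Qed.

Definition seam_inversions :=
  \sum_x \sum_y ((moved x) && (diag x < n.-1) && ((moved y) && (diag y == n.-1)) : nat).
Definition diag_inversions := \sum_x \sum_y diag_lt_pair x y * (xpos (rho y) < xpos (rho x)).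

Lemma odd_perm_snake : odd_perm rho = odd (seam_inversions + diag_inversions).
Proof.
rewrite (odd_perm_inversions (diag_key_inj hn)) (odd_inversions_moved (diag_key_inj hn)).
rewrite /seam_inversions /diag_inversions -big_split /=.
congr (odd _); apply: eq_bigr => x _; rewrite -big_split /=; apply: eq_bigr => y _.
exact: moved_inversion.
Qed.

Lemma seam_inversions_eq : seam_inversions = (nmoved rho - nmoved_on rho 0) * nmoved_on rho 0.
Proof.
have E : \sum_x ((moved x) && (diag x < n.-1) : nat) + nmoved_on rho n.-1 = nmoved rho.
  rewrite /nmoved_on /nmoved -big_split /=; apply: eq_bigr => x _.
  by have := diag_lt hn x; case: (moved x) => //= h; case: ltngtP => //; lia.
rewrite -(nmoved_on_const hn hrho (s := n.-1)); last lia.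
rewrite -E addnK /seam_inversions big_distrl /=; apply: eq_bigr => x _.
by rewrite big_distrr /=; apply: eq_bigr => y _; rewrite mulnb.
Qed.

Definition ncrossings := \sum_x \sum_y (crossing_pair x y : nat).
Definition nwrap_pairs := \sum_x \sum_y diag_lt_pair x y * xwraps y.

Lemma odd_diag_inversions : odd diag_inversions = odd (ncrossings + nwrap_pairs).
Proof.
set last_pos := (2 * n).-1.
have E : \sum_x \sum_y (diag_lt_pair x y * (xpos (rho y) < xpos (rho x)) +
                       crossing_pair y x * (xpos y == last_pos)) =
         \sum_x \sum_y (crossing_pair x y * (xpos x < last_pos) + diag_lt_pair x y * xwraps y).
  by apply: eq_bigr => x _; apply: eq_bigr => y _; apply: diag_lt_pair_swap.
rewrite (eq_bigr _ (fun x _ => big_split _ _ _ _ _)) big_split /= in E.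
rewrite [X in _ = X](eq_bigr _ (fun x _ => big_split _ _ _ _ _)) [X in _ = X]big_split /= in E.
rewrite [X in _ + X = _]exchange_big /= -/diag_inversions -/nwrap_pairs in E.
have E2 : ncrossings = \sum_x \sum_y crossing_pair x y * (xpos x < last_pos) +
                       \sum_x \sum_y crossing_pair x y * (xpos x == last_pos).
  rewrite /ncrossings -big_split /=; apply: eq_bigr => x _; rewrite -big_split /=.
  apply: eq_bigr => y _; have := xpos_lt hn x.
  by case: (crossing_pair x y) => //=; case: ltngtP => //; lia.
have -> : ncrossings + nwrap_pairs =
    diag_inversions + 2 * \sum_x \sum_y crossing_pair x y * (xpos x == last_pos).
  by rewrite E2 addnAC -E -addnA addnn -mul2n.
by rewrite oddD oddM addbF.
Qed.

Lemma nwrap_pairs_eq : nwrap_pairs = xwinding rho * (nmoved_on rho 0 - 1).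
Proof.
rewrite /nwrap_pairs exchange_big /xwinding big_distrl /=; apply: eq_bigr => y _.
case hw: (xwraps y); last by rewrite /= mul0n big1 // => x _; rewrite muln0.
have [my py] := xwraps_moved hn hrho hw.
rewrite mul1n (eq_bigr (fun x => diag_lt_pair x y : nat)) => [|x _]; last by rewrite /= muln1.
rewrite -(nmoved_on_const hn hrho (diag_lt hn y)).
have E x : ((moved x) && (diag x == diag y) : nat) = diag_lt_pair x y + (x == y).
  rewrite /diag_lt_pair my; have [->|xy] := eqVneq x y; first by rewrite my eqxx ltnn.
  rewrite addn0; case mx: (moved x) => //=; case dxy: (diag x == diag y) => //=.
  have : xpos x != xpos y.
    by apply: contra xy => /eqP ep; apply/eqP; apply: (diag_xpos_inj hn) => //; apply/eqP.
  by have := xpos_lt hn x; rewrite py; case: ltngtP => //; lia.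
by rewrite /nmoved_on (eq_bigr _ (fun x _ => E x)) big_split /= sum_eq1 addnK.
Qed.

End SignOfSnake.

Section Crossings.
Variables (n : nat) (hn : 1 < n) (rho : {perm midedge n}) (hrho : is_gsnake rho).
Implicit Types x y : midedge n.
Local Notation step1 := (step1 rho).
Local Notation step2 := (step2 rho).

(* The white mid-edge following x on its antidiagonal. *)
Definition partner x : midedge n := (true, (x.2.1 + 1, x.2.2 - 1))%R.

Lemma xcoord_partner x : xcoord (partner x) = succ_mod n (xcoord x).
Proof. exact: Zp_val_succ. Qed.

Lemma ycoord_partner x :
  ycoord (partner x) = if ycoord x == 0 then n.-1 else (ycoord x).-1.
Proof. exact: Zp_val_pred. Qed.

Lemma partner_diag_xpos x : x.1 = false ->
  diag (partner x) = diag x /\ xpos (partner x) = succ_mod (2 * n) (xpos x).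
Proof.
move=> c; rewrite /diag /xpos xcoord_partner ycoord_partner c /succ_mod /=.
have := xcoord_lt hn x; have := ycoord_lt hn x => h1 h2.
by rewrite !modn_lt_double; case_ifs; lia.
Qed.

Lemma crossing_pairE x y : crossing_pair rho x y = (y == partner x) && step1 x && step2 y.
Proof.
rewrite /crossing_pair; case hb: (step1 x); last by rewrite !andbF.
have c : x.1 = false by move: hb; case: (stepP hn hrho x).
have [hd hp] := partner_diag_xpos c.
rewrite andbT /=; case: (step2 y); rewrite ?andbF ?andbT //=.
apply/idP/idP => [/andP[/eqP dxy /eqP pxy]|/eqP ->]; last by rewrite hd hp !eqxx.
by apply/eqP; apply: (diag_xpos_inj hn); rewrite ?hd ?hp.
Qed.

Lemma sum_crossing_row x : \sum_y (crossing_pair rho x y : nat) = step1 x && step2 (partner x).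
Proof.
rewrite (eq_bigr _ (fun y _ => congr1 nat_of_bool (crossing_pairE x y))).
by rewrite (bigD1 (partner x)) //= eqxx big1 ?addn0 // => y /negbTE ->.
Qed.

Lemma vsubK (v w : vert n) : vadd (vsub v w) w = v.
Proof. by case: v w => a b [c d]; rewrite /vadd /vsub /= !subrK. Qed.

Lemma ncrossings_Scount : ncrossings rho = Scount rho.
Proof.
rewrite /ncrossings (eq_bigr _ (fun x _ => sum_crossing_row x)).
rewrite (_ : \sum_x _ =
    \sum_(c : bool) \sum_(v : vert n) (step1 (c, v) && step2 (partner (c, v)) : nat));
  last by rewrite pair_bigA; apply: eq_bigr => -[].
rewrite big_bool /=.
rewrite big1 ?add0n => [|v _]; last by case: (stepP hn hrho (true, v)).
rewrite /Scount card_set_sum (reindex_inj (h := fun v => vsub v e1)) => [|u w /= e]; last first.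
  by rewrite -(vsubK u e1) e vsubK.
apply: eq_bigr => -[a b] _.
rewrite /step1 /step2 /plus1 /plus2 /partner /black /white /vsub /vadd /e1 /e2 /=.
by rewrite !subrK !subr0 !addr0.
Qed.

End Crossings.

Lemma odd_perm_Scount (n : nat) (hn : 1 < n) (rho : {perm midedge n}) :
  is_gsnake rho ->
  let m := xwinding rho + ywinding rho in
  odd_perm rho (+) odd (Scount rho) = odd ((n * m - m) * m + xwinding rho * (m - 1)).
Proof.
move=> hrho m.
rewrite (odd_perm_snake hn hrho) oddD (odd_diag_inversions hn hrho) (seam_inversions_eq hn hrho).
rewrite (ncrossings_Scount hn hrho) (nwrap_pairs_eq hn hrho).
rewrite (nmoved_on_sum hn hrho) (nmoved_on0_winding hn hrho) -/m.
rewrite !oddD.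
by case: (odd (Scount rho)); case: (odd ((n * m - m) * m)); case: (odd (xwinding rho * (m - 1))).
Qed.

Local Open Scope ring_scope.

Section Signs.
Variable R : realType.

Lemma sign_if (k : nat) : (-1) ^+ k = (if odd k then -1 else 1) :> R.
Proof. by rewrite -signr_odd; case: (odd k); rewrite ?expr1 ?expr0. Qed.

Lemma sum_Ctheta_sign (n a b : nat) : (0 < n)%N ->
  let m := (a + b)%N in
  \sum_(th : bool * bool) Ctheta n th.1 th.2 * (-1) ^+ (th.1 * a + th.2 * b)%N =
  (-1) ^+ ((n * m - m) * m + a * (m - 1))%N :> R.
Proof.
move=> n_gt0 m.
have odd_seam : odd ((n * m - m) * m) = ~~ odd n && odd m.
  rewrite -{2}[m]mul1n -mulnBl oddM.
  by case: n n_gt0 => // n' _; rewrite subSS subn0 oddM /= negbK; case: (odd n'); case: (odd m).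
have odd_wrap : odd (a * (m - 1)) = odd a && ~~ odd m.
  rewrite oddM; case: (posnP a) => [-> //|a_gt0].
  by rewrite oddB /= ?addbT //; lia.
rewrite (_ : \sum_(th : bool * bool) _ = \sum_(t1 : bool) \sum_(t2 : bool)
    Ctheta n t1 t2 * (-1) ^+ (t1 * a + t2 * b)%N); last by rewrite pair_bigA.
rewrite !big_bool /= /Ctheta !sign_if [odd (_ * m + _)]oddD odd_seam odd_wrap /m.
rewrite !add0n !add1n !addn1 !oddD !oddM /= ?negbK.
by case: (odd n); case: (odd a); case: (odd b); rewrite /=; lra.
Qed.

Lemma cos_pi_nat (k : nat) : cos (pi * k%:R) = (-1) ^+ k :> R.
Proof.
elim: k => [|k IH]; first by rewrite mulr0 cos0 expr0.
by rewrite -addn1 natrD mulrDr mulr1 cosDpi IH exprD expr1 mulrN1.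
Qed.

Lemma sin_pi_nat (k : nat) : sin (pi * k%:R) = 0 :> R.
Proof.
elim: k => [|k IH]; first by rewrite mulr0 sin0.
by rewrite -addn1 natrD mulrDr mulr1 sinDpi IH oppr0.
Qed.

Lemma expi_pi_nat (k : nat) : expi (pi * k%:R) = ((-1) ^+ k : R)%:C%C.
Proof. by rewrite /expi cos_pi_nat sin_pi_nat. Qed.

Lemma natr_half_sum (A C N W : nat) : (2 * A + C = 2 * N * W)%N ->
  A%:R + 2^-1 * C%:R = N%:R * W%:R :> R.
Proof. by move/(congr1 (fun k => k%:R : R)); rewrite /= !natrD !natrM; lra. Qed.

End Signs.

Theorem lemma3p2 (R : realType) (n : nat) (hn : (2 <= n)%N)
  (rho : {perm midedge n}) (hrho : is_gsnake rho) :
  lhs (R := R) rho = rhs rho.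
Proof.
set a := xwinding rho; set b := ywinding rho.
have n_gt0 : (0 < n)%N by lia.
have exponentE (t1 t2 : nat) :
    pi * t1%:R / n%:R * ((Acount rho)%:R + 2^-1 * (Ccount rho)%:R) +
    pi * t2%:R / n%:R * ((Bcount rho)%:R + 2^-1 * (Ccount rho)%:R) =
    pi * (t1 * a + t2 * b)%N%:R :> R.
  have nz : (n%:R : R) != 0 by rewrite pnatr_eq0 -lt0n.
  rewrite (natr_half_sum R (Acount_xwinding hn hrho)) (natr_half_sum R (Bcount_ywinding hn hrho)).
  by rewrite natrD !natrM; field.
have signE : (-1) ^+ odd_perm rho * (-1) ^+ Scount rho =
    (-1) ^+ ((n * (a + b) - (a + b)) * (a + b) + a * (a + b - 1))%N :> R.
  by rewrite -[(-1) ^+ Scount rho]signr_odd -signr_addb odd_perm_Scount // signr_odd.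
rewrite /lhs signE -(sum_Ctheta_sign R a b n_gt0) /rhs rmorph_sum; apply: eq_bigr => th _.
by rewrite exponentE expi_pi_nat rmorphM.
Qed.
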